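(* Let $\mathcal{E}$ be an extensive category with finite limits. If the full subcategory $\mathrm{Dec}\,\mathcal{E} \to \mathcal{E}$ is detached, then it is the least detached subcategory of $\mathcal{E}$, i.e. it is contained in every detached full reflective subcategory of $\mathcal{E}$.
   Context: Extensive category: a category with finite coproducts such that $\mathcal{E}/X \times \mathcal{E}/Y \to \mathcal{E}/(X+Y)$ is an equivalence for all $X,Y$. An object $X$ is decidable if its diagonal $X\to X\times X$ is a summand (a map $X\to Z$ is a summand if some $Y\to Z$ makes $X\to Z\leftarrow Y$ a coproduct); $\mathrm{Dec}\,\mathcal{E}$ is the full subcategory of decidable objects. For an extensive category $\mathcal{E}$ with finite products, a full reflective subcategory $\mathcal{S}\to\mathcal{E}$ (with reflector $L$ and unit $\sigma$) is detached if it is closed under finite coproducts, closed under subobjects (for every $A\in\mathcal{S}$ and mono $X\to A$, the unit $X \to LX$ is an isomorphism, i.e. $X$ lies in $\mathcal{S}$ up to iso), and the left adjoint $L$ preserves finite products. *)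

From Stdlib Require Import ProofIrrelevance.

Set Implicit Arguments.
Unset Strict Implicit.

Record Category := {
  ob :> Type;
  hom : ob -> ob -> Type;
  cid : forall A, hom A A;
  comp : forall A B D, hom B D -> hom A B -> hom A D;
  comp_id_l : forall A B (f : hom A B), comp (cid B) f = f;
  comp_id_r : forall A B (f : hom A B), comp f (cid A) = f;
  comp_assoc : forall A B D E (h : hom D E) (g : hom B D) (f : hom A B),
      comp h (comp g f) = comp (comp h g) f
}.

Arguments hom {c} _ _.
Arguments cid {c} A.
Arguments comp {c A B D} _ _.

Notation "g ∘ f" := (comp g f) (at level 40, left associativity).

Section Basic.
Context {C : Category}.

Definition is_iso {A B : C} (f : hom A B) : Prop :=
  exists g : hom B A, g ∘ f = cid A /\ f ∘ g = cid B.

Definition is_mono {A B : C} (f : hom A B) : Prop :=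
  forall X (g h : hom X A), f ∘ g = f ∘ h -> g = h.

Definition is_terminal (T : C) : Prop :=
  forall X : C, exists! t : hom X T, True.

Definition is_initial (I : C) : Prop :=
  forall X : C, exists! t : hom I X, True.

Definition is_product {X Y P : C} (p1 : hom P X) (p2 : hom P Y) : Prop :=
  forall W (f : hom W X) (g : hom W Y),
    exists! h : hom W P, p1 ∘ h = f /\ p2 ∘ h = g.

Definition is_coproduct {X Y Z : C} (i1 : hom X Z) (i2 : hom Y Z) : Prop :=
  forall W (f : hom X W) (g : hom Y W),
    exists! h : hom Z W, h ∘ i1 = f /\ h ∘ i2 = g.

Definition is_equalizer {E X Y : C} (e : hom E X) (f g : hom X Y) : Prop :=
  f ∘ e = g ∘ e /\
  forall W (k : hom W X), f ∘ k = g ∘ k -> exists! h : hom W E, e ∘ h = k.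

Definition is_summand {X Z : C} (f : hom X Z) : Prop :=
  exists (Y : C) (g : hom Y Z), is_coproduct f g.

End Basic.

Record FinCoproducts (C : Category) := {
  cinit : C;
  cinit_initial : is_initial cinit;
  cp : C -> C -> C;
  inl : forall X Y : C, hom X (cp X Y);
  inr : forall X Y : C, hom Y (cp X Y);
  copair : forall (X Y W : C), hom X W -> hom Y W -> hom (cp X Y) W;
  copair_inl : forall X Y W (f : hom X W) (g : hom Y W), copair f g ∘ inl X Y = f;
  copair_inr : forall X Y W (f : hom X W) (g : hom Y W), copair f g ∘ inr X Y = g;
  copair_uniq : forall X Y W (f : hom X W) (g : hom Y W) (h : hom (cp X Y) W),
      h ∘ inl X Y = f -> h ∘ inr X Y = g -> h = copair f g
}.

Arguments cinit {C} _.
Arguments cp {C} _ _ _.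
Arguments inl {C} _ X Y.
Arguments inr {C} _ X Y.
Arguments copair {C} _ {X Y W} _ _.

Record FinLimits (C : Category) := {
  term : C;
  term_terminal : is_terminal term;
  prod : C -> C -> C;
  pr1 : forall X Y : C, hom (prod X Y) X;
  pr2 : forall X Y : C, hom (prod X Y) Y;
  pair : forall (W X Y : C), hom W X -> hom W Y -> hom W (prod X Y);
  pair_pr1 : forall W X Y (f : hom W X) (g : hom W Y), pr1 X Y ∘ pair f g = f;
  pair_pr2 : forall W X Y (f : hom W X) (g : hom W Y), pr2 X Y ∘ pair f g = g;
  pair_uniq : forall W X Y (f : hom W X) (g : hom W Y) (h : hom W (prod X Y)),
      pr1 X Y ∘ h = f -> pr2 X Y ∘ h = g -> h = pair f g;
  has_equalizers : forall (X Y : C) (f g : hom X Y),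
      exists (E : C) (e : hom E X), is_equalizer e f g
}.

Arguments term {C} _.
Arguments prod {C} _ _ _.
Arguments pr1 {C} _ X Y.
Arguments pr2 {C} _ X Y.
Arguments pair {C} _ {W X Y} _ _.

Record Functor (C D : Category) := {
  fobj :> C -> D;
  fmap : forall A B : C, hom A B -> hom (fobj A) (fobj B);
  fmap_id : forall A, fmap (cid A) = cid (fobj A);
  fmap_comp : forall A B E (g : hom B E) (f : hom A B),
      fmap (g ∘ f) = fmap g ∘ fmap f
}.
Arguments fmap {C D} _ {A B} _.

Definition is_equivalence {C D : Category} (F : Functor C D) : Prop :=
  exists G : Functor D C,
    (exists eta : forall X : C, hom X (G (F X)),
        (forall X, is_iso (eta X)) /\
        (forall X Y (f : hom X Y), eta Y ∘ f = fmap G (fmap F f) ∘ eta X)) /\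
    (exists eps : forall Y : D, hom (F (G Y)) Y,
        (forall Y, is_iso (eps Y)) /\
        (forall Y Y' (g : hom Y Y'), eps Y' ∘ fmap F (fmap G g) = g ∘ eps Y)).

Lemma sig_eq_pi {A : Type} {P : A -> Prop} (x y : {a : A | P a}) :
  proj1_sig x = proj1_sig y -> x = y.
Proof.
  destruct x as [a pa], y as [b pb]; simpl; intros ->.
  f_equal; apply proof_irrelevance.
Qed.

Section Slice.
Context (C : Category) (X : C).

Definition slice_ob := {A : C & hom A X}.
Definition slice_hom (a b : slice_ob) :=
  {f : hom (projT1 a) (projT1 b) | projT2 b ∘ f = projT2 a}.

Definition slice_id (a : slice_ob) : slice_hom a a :=
  exist _ (cid (projT1 a)) (comp_id_r (projT2 a)).

Program Definition slice_comp (a b d : slice_ob)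
  (g : slice_hom b d) (f : slice_hom a b) : slice_hom a d :=
  exist _ (proj1_sig g ∘ proj1_sig f) _.
Next Obligation.
  destruct g as [g Hg], f as [f Hf]; simpl.
  rewrite comp_assoc, Hg; exact Hf.
Qed.

Lemma slice_id_l (a b : slice_ob) (f : slice_hom a b) :
  slice_comp (slice_id b) f = f.
Proof. apply sig_eq_pi; simpl; apply comp_id_l. Qed.
Lemma slice_id_r (a b : slice_ob) (f : slice_hom a b) :
  slice_comp f (slice_id a) = f.
Proof. apply sig_eq_pi; simpl; apply comp_id_r. Qed.
Lemma slice_assoc (a b d e : slice_ob) (h : slice_hom d e) (g : slice_hom b d)
  (f : slice_hom a b) :
  slice_comp h (slice_comp g f) = slice_comp (slice_comp h g) f.
Proof. apply sig_eq_pi; simpl; apply comp_assoc. Qed.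

Definition Slice : Category :=
  {| ob := slice_ob; hom := slice_hom; cid := slice_id; comp := slice_comp;
     comp_id_l := slice_id_l; comp_id_r := slice_id_r;
     comp_assoc := slice_assoc |}.

End Slice.

Section ProdCat.
Context (C D : Category).

Program Definition ProdCat : Category :=
  {| ob := (C * D)%type;
     hom a b := (hom (fst a) (fst b) * hom (snd a) (snd b))%type;
     cid a := (cid (fst a), cid (snd a));
     comp a b d g f := (fst g ∘ fst f, snd g ∘ snd f) |}.
Next Obligation. destruct f; simpl; rewrite !comp_id_l; reflexivity. Qed.
Next Obligation. destruct f; simpl; rewrite !comp_id_r; reflexivity. Qed.
Next Obligation. destruct h, g, f; simpl; rewrite !comp_assoc; reflexivity. Qed.

End ProdCat.

Section Extensive.
Context {C : Category} (K : FinCoproducts C).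

Definition cpmap {A B A' B' : C} (f : hom A A') (g : hom B B') :
  hom (cp K A B) (cp K A' B') :=
  copair K (inl K A' B' ∘ f) (inr K A' B' ∘ g).

Lemma copair_comp {A B W V : C} (f : hom A W) (g : hom B W) (h : hom W V) :
  h ∘ copair K f g = copair K (h ∘ f) (h ∘ g).
Proof.
  apply copair_uniq.
  - rewrite <- comp_assoc, copair_inl; reflexivity.
  - rewrite <- comp_assoc, copair_inr; reflexivity.
Qed.

Lemma copair_cpmap {A B A' B' W : C} (f : hom A A') (g : hom B B')
  (u : hom A' W) (v : hom B' W) :
  copair K u v ∘ cpmap f g = copair K (u ∘ f) (v ∘ g).
Proof.
  unfold cpmap; rewrite copair_comp, !comp_assoc, copair_inl, copair_inr.
  reflexivity.
Qed.

Definition sum_ob (X Y : C) (ab : Slice X * Slice Y) : Slice (cp K X Y) :=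
  existT _ (cp K (projT1 (fst ab)) (projT1 (snd ab)))
           (cpmap (projT2 (fst ab)) (projT2 (snd ab))).

Program Definition sum_hom (X Y : C) (ab ab' : Slice X * Slice Y)
  (fg : hom (c := ProdCat (Slice X) (Slice Y)) ab ab') :
  hom (c := Slice (cp K X Y)) (sum_ob ab) (sum_ob ab') :=
  exist _ (cpmap (proj1_sig (fst fg)) (proj1_sig (snd fg))) _.
Next Obligation.
  destruct ab as [[A a] [B b]], ab' as [[A' a'] [B' b']],
           fg as [[f Hf] [g Hg]]; simpl in *.
  unfold cpmap at 1; rewrite copair_cpmap, <- !comp_assoc, Hf, Hg.
  reflexivity.
Qed.

Lemma sum_hom_id (X Y : C) (ab : Slice X * Slice Y) :
  sum_hom (cid (c := ProdCat (Slice X) (Slice Y)) ab) = cid (sum_ob ab).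
Proof.
  apply sig_eq_pi; simpl. unfold cpmap. symmetry; apply copair_uniq;
  rewrite comp_id_l, comp_id_r; reflexivity.
Qed.

Lemma sum_hom_comp (X Y : C) (a b d : Slice X * Slice Y)
  (g : hom (c := ProdCat (Slice X) (Slice Y)) b d)
  (f : hom (c := ProdCat (Slice X) (Slice Y)) a b) :
  sum_hom (g ∘ f) = sum_hom g ∘ sum_hom f.
Proof.
  apply sig_eq_pi; destruct g as [[g1 Hg1] [g2 Hg2]], f as [[f1 Hf1] [f2 Hf2]].
  simpl. unfold cpmap at 2.
  rewrite copair_cpmap. unfold cpmap. rewrite !comp_assoc. reflexivity.
Qed.

Definition sum_functor (X Y : C) :
  Functor (ProdCat (Slice X) (Slice Y)) (Slice (cp K X Y)) :=
  @Build_Functor (ProdCat (Slice X) (Slice Y)) (Slice (cp K X Y))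
    (@sum_ob X Y) (@sum_hom X Y) (@sum_hom_id X Y) (@sum_hom_comp X Y).

Definition extensive : Prop :=
  forall X Y : C, is_equivalence (sum_functor X Y).

End Extensive.

Definition decidable {C : Category} (L : FinLimits C) (X : C) : Prop :=
  is_summand (pair L (cid X) (cid X)).

(** * Full reflective subcategories (given by a predicate on objects) *)
Record Reflection (C : Category) (P : C -> Prop) := {
  rL : C -> C;
  rL_in : forall X, P (rL X);
  runit : forall X : C, hom X (rL X);
  rext : forall (X A : C), P A -> hom X A -> hom (rL X) A;
  rext_comm : forall X A (HA : P A) (f : hom X A), rext HA f ∘ runit X = f;
  rext_uniq : forall X A (HA : P A) (f : hom X A) (g : hom (rL X) A),
      g ∘ runit X = f -> g = rext HA f
}.
Arguments rL {C P} _ _.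
Arguments runit {C P} _ X.
Arguments rext {C P} _ {X A} _ _.

Definition rmap {C : Category} {P : C -> Prop} (R : Reflection P)
  {X Y : C} (f : hom X Y) : hom (rL R X) (rL R Y) :=
  rext R (rL_in R Y) (runit R Y ∘ f).

Section Detached.
Context {C : Category} (L : FinLimits C) (K : FinCoproducts C).
Context {P : C -> Prop} (R : Reflection P).

(** X lies in S (up to isomorphism) iff its unit is an isomorphism. *)
Definition in_sub (X : C) : Prop := is_iso (runit R X).

Definition closed_fin_coproducts : Prop :=
  in_sub (cinit K) /\ forall A B, P A -> P B -> in_sub (cp K A B).

Definition closed_subobjects : Prop :=
  forall (A X : C) (m : hom X A), P A -> is_mono m -> in_sub X.

Definition preserves_fin_products : Prop :=
  is_terminal (rL R (term L)) /\
  forall X Y : C,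
    is_product (rmap R (pr1 L X Y)) (rmap R (pr2 L X Y)).

Definition detached : Prop :=
  closed_fin_coproducts /\ closed_subobjects /\ preserves_fin_products.

End Detached.


(** Let [S] be a detached full reflective subcategory of an extensive
    category [E] with finite limits, with reflector [L] and unit [η].  For a
    decidable object [X], with diagonal [δ : X -> X × X] and complement
    [c : Y -> X × X], we show that [η_X : X -> LX] is a monomorphism; since
    [LX] lies in [S] and [S] is closed under subobjects, [X] lies in [S].
    Monicity uses the three ingredients of detachedness:
    - [L] preserves binary products, so [η g = η h] gives [η <g,h> = η (δh)];
    - [L1 + L1] lies in [S], so the classifying map [χ : X × X -> L1 + L1] of
      the summand [δ] satisfies [χ <g,h> = χ δ h];
    - extensivity (disjoint coproducts, decomposition of maps into a sum)
      then forces [<g,h>] to factor through [δ], i.e. [g = h]. *)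

(** An object admitting at most one map into every object; in the presence
    of an initial object these are exactly the initial objects. *)
Definition is_empty {C : Category} (Z : C) : Prop :=
  forall W (f g : hom Z W), f = g.

Lemma initial_is_empty {C : Category} {O : C} : is_initial O -> is_empty O.
Proof.
  intros HO W f g.
  destruct (HO W) as [t [_ Ht]].
  rewrite <- (Ht f I); apply Ht; exact I.
Qed.

Lemma empty_of_retract {C : Category} {Z O : C} (r : hom O Z) (s : hom Z O) :
  is_empty O -> r ∘ s = cid Z -> is_empty Z.
Proof.
  intros HO Hrs W f g.
  rewrite <- (comp_id_r f), <- (comp_id_r g), <- Hrs, !comp_assoc.
  f_equal; apply HO.
Qed.

Lemma equivalence_reflects_retract {D E : Category} {F : Functor D E} :
  is_equivalence F ->
  forall {a b : D} {m : hom (F a) (F b)} {m' : hom (F b) (F a)},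
  m' ∘ m = cid (F a) -> exists (al : hom a b) (be : hom b a), be ∘ al = cid a.
Proof.
  intros [G [[eta [Heta _]] _]] a b m m' Hmm.
  destruct (Heta a) as [ea' [Ha _]], (Heta b) as [eb' [_ Hb]].
  exists (eb' ∘ fmap G m ∘ eta a), (ea' ∘ fmap G m' ∘ eta b).
  rewrite !comp_assoc.
  rewrite <- (comp_assoc (ea' ∘ fmap G m') (eta b) eb'), Hb, comp_id_r.
  rewrite <- (comp_assoc ea' (fmap G m') (fmap G m)), <- fmap_comp, Hmm,
    fmap_id, comp_id_r.
  exact Ha.
Qed.

Section ExtensiveFacts.
Context {C : Category} (K : FinCoproducts C) (ext : extensive K).

(** The two objects
    [(Z, 0)] and [(0, Z)] of [E/A × E/B] have isomorphic images in
    [E/(A+B)], so [Z] is a retract of [0]. *)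
Lemma extensive_disjoint {A B Z : C} (u : hom Z A) (v : hom Z B) :
  inl K A B ∘ u = inr K A B ∘ v -> is_empty Z.
Proof.
  intros Huv.
  pose proof (initial_is_empty (cinit_initial K) : is_empty (cinit K)) as HO.
  destruct (cinit_initial K A) as [iA _], (cinit_initial K B) as [iB _],
    (cinit_initial K (cp K (cinit K) Z)) as [i1 _],
    (cinit_initial K (cp K Z (cinit K))) as [i2 _].
  pose (a := (existT (fun D => hom D A) Z u,
              existT (fun D => hom D B) (cinit K) iB)
         : ob (ProdCat (Slice A) (Slice B))).
  pose (b := (existT (fun D => hom D A) (cinit K) iA,
              existT (fun D => hom D B) Z v)
         : ob (ProdCat (Slice A) (Slice B))).
  assert (Hm : cpmap K iA v ∘ copair K (inr K (cinit K) Z) i1 = cpmap K u iB).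
  { unfold cpmap at 2; apply copair_uniq.
    - rewrite <- comp_assoc, copair_inl; unfold cpmap; rewrite copair_inr.
      symmetry; exact Huv.
    - apply HO. }
  assert (Hm' : cpmap K u iB ∘ copair K i2 (inl K Z (cinit K)) = cpmap K iA v).
  { unfold cpmap at 2; apply copair_uniq.
    - apply HO.
    - rewrite <- comp_assoc, copair_inr; unfold cpmap; rewrite copair_inl.
      exact Huv. }
  pose (m := exist _ _ Hm
        : hom (c := Slice (cp K A B)) (sum_functor K A B a) (sum_functor K A B b)).
  pose (m' := exist _ _ Hm'
        : hom (c := Slice (cp K A B)) (sum_functor K A B b) (sum_functor K A B a)).
  assert (Hmm : m' ∘ m = cid _).
  { apply sig_eq_pi; simpl.
    rewrite copair_comp, copair_inr.
    symmetry; apply copair_uniq; [apply comp_id_l | apply HO]. }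
  destruct (equivalence_reflects_retract (ext A B) Hmm) as [al [be Hba]].
  apply (empty_of_retract (proj1_sig (fst be)) (proj1_sig (fst al)) HO).
  exact (f_equal (fun p => proj1_sig (fst p)) Hba).
Qed.

(** Every map [k : W -> X + Y] splits [W] as a coproduct [W1 + W2] lying over
    [X] and [Y] respectively (up to a split epimorphism onto [W], which is
    all we need): this is essential surjectivity of [E/X × E/Y -> E/(X+Y)]. *)
Lemma extensive_decompose {X Y W : C} (k : hom W (cp K X Y)) :
  exists (W1 W2 : C) (w1 : hom W1 X) (w2 : hom W2 Y)
         (e : hom (cp K W1 W2) W) (e' : hom W (cp K W1 W2)),
    e ∘ e' = cid W /\ k ∘ e = cpmap K w1 w2.
Proof.
  destruct (ext X Y) as [G [_ [eps [Heps _]]]].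
  set (w := existT (fun D => hom D (cp K X Y)) W k : Slice (cp K X Y)).
  destruct (Heps w) as [e' [_ He]].
  set (e := eps w) in *; clearbody e.
  destruct (G w) as [[W1 w1] [W2 w2]].
  destruct e as [ee Hee], e' as [ee' Hee'].
  exists W1, W2, w1, w2, ee, ee'; split.
  - exact (f_equal (@proj1_sig _ _) He).
  - exact Hee.
Qed.

End ExtensiveFacts.

Section Summands.
Context {C : Category} (K : FinCoproducts C).

(** A coproduct diagram [A -> Z <- B] identifies [Z] with the chosen
    coproduct [A + B]; we only need the comparison map and that it is a
    section of [[s, c] : A + B -> Z]. *)
Lemma coproduct_comparison {A B Z : C} {s : hom A Z} {c : hom B Z} :
  is_coproduct s c ->
  exists j : hom Z (cp K A B),
    j ∘ s = inl K A B /\ j ∘ c = inr K A B /\ copair K s c ∘ j = cid Z.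
Proof.
  intros Hsc.
  destruct (Hsc _ (inl K A B) (inr K A B)) as [j [[Hjs Hjc] _]].
  exists j; repeat split; auto.
  destruct (Hsc Z s c) as [u [_ Hu]].
  transitivity u; [symmetry|]; apply Hu; split.
  - rewrite <- comp_assoc, Hjs, copair_inl; reflexivity.
  - rewrite <- comp_assoc, Hjc, copair_inr; reflexivity.
  - apply comp_id_l.
  - apply comp_id_l.
Qed.

(** In an extensive category, let [s : A -> Z] be a summand with complement
    [c : B -> Z], and let [k : W -> Z] be a map whose restriction over [c] is
    empty.  Then [k] factors through [s], so maps that agree on [s] agree on
    [k]. *)
Lemma summand_separates (ext : extensive K) {A B Z W X : C}
  (s : hom A Z) (c : hom B Z) (k : hom W Z) :
  is_coproduct s c ->
  (forall V (x : hom V W) (y : hom V B), k ∘ x = c ∘ y -> is_empty V) ->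
  forall f f' : hom Z X, f ∘ s = f' ∘ s -> f ∘ k = f' ∘ k.
Proof.
  intros Hsc Hempty f f' Hff.
  destruct (coproduct_comparison Hsc) as [j [_ [_ Hj]]].
  destruct (extensive_decompose K ext (j ∘ k))
    as [W1 [W2 [w1 [w2 [e [e' [Hee' Hk]]]]]]].
  assert (Hke : k ∘ e = copair K (s ∘ w1) (c ∘ w2)).
  { rewrite <- (comp_id_l k), <- Hj, <- !comp_assoc, (comp_assoc j), Hk.
    apply copair_cpmap. }
  assert (HW2 : is_empty W2).
  { apply (Hempty W2 (e ∘ inr K W1 W2) w2).
    rewrite comp_assoc, Hke; apply copair_inr. }
  rewrite <- (comp_id_r (f ∘ k)), <- (comp_id_r (f' ∘ k)), <- Hee'.
  rewrite !comp_assoc, <- !(comp_assoc _ k e), Hke, !copair_comp, !comp_assoc,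
    Hff.
  rewrite (HW2 _ (f ∘ c ∘ w2) (f' ∘ c ∘ w2)); reflexivity.
Qed.

End Summands.

Section Reflections.
Context {C : Category} {P : C -> Prop} (R : Reflection P).

Lemma rmap_nat {A B : C} (f : hom A B) :
  rmap R f ∘ runit R A = runit R B ∘ f.
Proof. unfold rmap; apply rext_comm. Qed.

Lemma unit_coequalizes_into_sub {A B V : C} (chi : hom A B) (k k' : hom V A) :
  in_sub R B -> runit R A ∘ k = runit R A ∘ k' -> chi ∘ k = chi ∘ k'.
Proof.
  intros [r [Hr _]] Hkk.
  set (chi' := rext R (rL_in R B) (runit R B ∘ chi)).
  assert (Hchi : chi = r ∘ chi' ∘ runit R A).
  { unfold chi'; rewrite <- comp_assoc, rext_comm, comp_assoc, Hr.
    symmetry; apply comp_id_l. }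
  rewrite Hchi, <- !comp_assoc, Hkk; reflexivity.
Qed.

Lemma unit_pair (L : FinLimits C) :
  (forall X Y : C, is_product (rmap R (pr1 L X Y)) (rmap R (pr2 L X Y))) ->
  forall {W X Y : C} (g g' : hom W X) (h h' : hom W Y),
  runit R X ∘ g = runit R X ∘ g' -> runit R Y ∘ h = runit R Y ∘ h' ->
  runit R (prod L X Y) ∘ pair L g h = runit R (prod L X Y) ∘ pair L g' h'.
Proof.
  intros Hprod W X Y g g' h h' Hg Hh.
  destruct (Hprod X Y W (runit R X ∘ g) (runit R Y ∘ h)) as [u [_ Hu]].
  transitivity u; [symmetry|]; apply Hu; split;
    rewrite comp_assoc, rmap_nat, <- comp_assoc;
    rewrite ?pair_pr1, ?pair_pr2; auto.
Qed.

End Reflections.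

Section DecidableObjects.
Context {C : Category} (L : FinLimits C) (K : FinCoproducts C) (ext : extensive K).
Context {P : C -> Prop} (R : Reflection P).

(** If [ηg = ηh], then [η<g,h> = η<h,h> = η(δh)].  The map
    [χ : X × X ≅ X + Y -> L1 + L1] classifying the diagonal [δ] has codomain
    in the subcategory, hence [χ<g,h> = χδh = inl ∘ !]; by disjointness the
    part of [W] over the complement [Y] of [δ] is empty, so [<g,h>] factors
    through [δ], i.e. [g = h]. *)
Lemma decidable_unit_mono :
  (forall A B : C, P A -> P B -> in_sub R (cp K A B)) ->
  (forall X Y : C, is_product (rmap R (pr1 L X Y)) (rmap R (pr2 L X Y))) ->
  forall X : C, decidable L X -> is_mono (runit R X).
Proof.
  intros Hcop Hprod X [Y [c Hc]] W g h Hgh.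
  set (d := pair L (cid X) (cid X)) in *.
  destruct (coproduct_comparison K Hc) as [j [Hjd [Hjc _]]].
  set (T := rL R (term L)).
  destruct (term_terminal L X) as [tX _], (term_terminal L Y) as [tY _].
  set (a := runit R (term L) ∘ tX); set (b := runit R (term L) ∘ tY).
  set (chi := cpmap K a b ∘ j).
  assert (Hchi_d : chi ∘ d = inl K T T ∘ a).
  { unfold chi, cpmap; rewrite <- comp_assoc, Hjd; apply copair_inl. }
  assert (Hchi_c : chi ∘ c = inr K T T ∘ b).
  { unfold chi, cpmap; rewrite <- comp_assoc, Hjc; apply copair_inr. }
  assert (Hdiag : pair L h h = d ∘ h).
  { symmetry; apply pair_uniq; rewrite comp_assoc; unfold d;
      rewrite ?pair_pr1, ?pair_pr2; apply comp_id_l. }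
  assert (Hchi_gh : chi ∘ pair L g h = inl K T T ∘ a ∘ h).
  { rewrite (unit_coequalizes_into_sub R chi (pair L g h) (pair L h h)).
    - rewrite Hdiag, comp_assoc, Hchi_d; reflexivity.
    - apply Hcop; apply rL_in.
    - apply unit_pair; auto. }
  assert (Hsep : pr1 L X X ∘ pair L g h = pr2 L X X ∘ pair L g h).
  { apply (summand_separates K ext d c (pair L g h) Hc).
    - intros V x y Hxy.
      apply (extensive_disjoint K ext (a ∘ h ∘ x) (b ∘ y)).
      transitivity (chi ∘ (pair L g h ∘ x)).
      + rewrite (comp_assoc chi), Hchi_gh, !comp_assoc; reflexivity.
      + rewrite Hxy, (comp_assoc chi), Hchi_c, comp_assoc; reflexivity.
    - unfold d; rewrite pair_pr1, pair_pr2; reflexivity. }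
  rewrite pair_pr1, pair_pr2 in Hsep; exact Hsep.
Qed.

Lemma decidable_in_detached :
  detached L K R -> forall X : C, decidable L X -> in_sub R X.
Proof.
  intros [[_ Hcop] [Hsub [_ Hprod]]] X HX.
  apply (Hsub (rL R X) X (runit R X) (rL_in R X)).
  exact (decidable_unit_mono Hcop Hprod X HX).
Qed.

End DecidableObjects.

Theorem corollary2p10 (C : Category) (L : FinLimits C) (K : FinCoproducts C) :
  extensive K ->
  forall RD : Reflection (decidable L),
  detached L K RD ->
  forall (P : C -> Prop) (R : Reflection P),
  detached L K R ->
  forall X : C, decidable L X -> in_sub R X.
Proof.
  intros ext _ _ P R HR.
  exact (decidable_in_detached L K ext R HR).
Qed.
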